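(* Let $J\in\mathfrak{so}(\mathfrak a)$ be a non-singular skew-symmetric endomorphism of a Euclidean space $\mathfrak a$, and let $V=\mathbb R J$ with any inner product. Then $(V,\langle\cdot,\cdot\rangle)$ is a WS-pair; in fact for every $X\in\mathfrak a$ there exists $N\in O(\mathfrak a)$ with $NJN^{-1}=-J$ and $NX=-X$.
   Context: For a Euclidean space $\mathfrak a$, a subspace $V\subset\mathfrak{so}(\mathfrak a)$ with inner product $\langle\cdot,\cdot\rangle$ defines the metric 2-step nilpotent Lie algebra $\mathfrak n=V\oplus\mathfrak a$ (orthogonal sum, $V$ central, $\langle J,[X,Y]\rangle=\langle JX,Y\rangle$ for $J\in V$, $X,Y\in\mathfrak a$). It is a WS-pair if the corresponding simply connected nilpotent Lie group with left-invariant metric is weakly symmetric (any two points can be interchanged by an isometry). Standing fact: $(V,\langle\cdot,\cdot\rangle)$ is a WS-pair iff for every $J\in V$ and $X\in\mathfrak a$ there is $N$ in the orthogonal normalizer $\mathcal N(V)=\{N\in O(\mathfrak a): NVN^{-1}\subset V \text{ and } K\mapsto NKN^{-1} \text{ is an orthogonal map of } (V,\langle\cdot,\cdot\rangle)\}$ with $NX=-X$ and $NJ=-JN$. *)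

(* Euclidean space a = 'cV[R]_n with the standard inner
   product; endomorphisms of a = 'M[R]_n acting by left multiplication. *)
From HB Require Import structures.
From mathcomp Require Import all_boot all_order all_algebra.
From mathcomp Require Import reals.
Set Implicit Arguments. Unset Strict Implicit. Unset Printing Implicit Defensive.
Import Order.TTheory GRing.Theory Num.Theory.
Local Open Scope ring_scope.

Section Defs.
Variables (R : realType) (n : nat).

Definition skew_sym (A : 'M[R]_n) : Prop := A^T = - A.

Definition orth_mx (N : 'M[R]_n) : Prop := N^T *m N = 1%:M.

Definition is_so_subspace (V : 'M[R]_n -> Prop) : Prop :=
  V 0 /\ (forall (c : R) K L, V K -> V L -> V (c *: K + L)) /\
  (forall K, V K -> skew_sym K).

(* ip is an inner product on V (only its values on V matter). *)
Definition is_inner_product (V : 'M[R]_n -> Prop) (ip : 'M[R]_n -> 'M[R]_n -> R)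
  : Prop :=
  (forall (c : R) K L M, V K -> V L -> V M ->
      ip (c *: K + L) M = c * ip K M + ip L M) /\
  (forall K L, V K -> V L -> ip K L = ip L K) /\
  (forall K, V K -> K != 0 -> 0 < ip K K).

Definition orth_normalizer (V : 'M[R]_n -> Prop) (ip : 'M[R]_n -> 'M[R]_n -> R)
  (N : 'M[R]_n) : Prop :=
  orth_mx N /\
  (forall K, V K -> V (N *m K *m invmx N)) /\
  (forall K L, V K -> V L ->
     ip (N *m K *m invmx N) (N *m L *m invmx N) = ip K L).

(* WS-pair, via the standing characterization of the paper *)
Definition WS_pair (V : 'M[R]_n -> Prop) (ip : 'M[R]_n -> 'M[R]_n -> R) : Prop :=
  is_so_subspace V /\ is_inner_product V ip /\
  forall (J : 'M[R]_n) (X : 'cV[R]_n), V J ->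
    exists N, orth_normalizer V ip N /\ N *m X = - X /\ N *m J = - (J *m N).

Definition line (J : 'M[R]_n) : 'M[R]_n -> Prop := fun K => exists c : R, K = c *: J.

End Defs.

From HB Require Import structures.
From mathcomp Require Import all_boot all_order all_algebra.
From mathcomp Require Import reals.
From mathcomp Require Import complex spectral.
From mathcomp Require Import ring lra zify.
Set Implicit Arguments. Unset Strict Implicit. Unset Printing Implicit Defensive.
Import Order.TTheory GRing.Theory Num.Theory.
Local Open Scope ring_scope.

(* Since J is skew and invertible, -J^2 = J^T J is symmetric positive definite
   and commutes with J, so the space splits orthogonally into J-invariant planes
   spanned by pairs (w, J w) with w an eigenvector of J^2 (found over R[i]).
   On such a plane every reflection anticommutes with J; choosing w so that J w
   is orthogonal to X, the reflection negating w and fixing J w sends the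
   component of X in the plane to its opposite. The sum of these reflections is
   the required N, built by induction on the trace of an orthogonal projection
   commuting with J. Conjugation by N maps c J to -c J, which preserves any
   inner product on R J. *)

Section RealAndImaginaryParts.
Variable R : rcfType.
Local Notation toC := (real_complex R).
Local Notation Remx := (map_mx (@complex.Re R)).
Local Notation Immx := (map_mx (@complex.Im R)).

Lemma Re_mulmx_real m n p (u : 'M[R[i]]_(m, n)) (M : 'M[R]_(n, p)) :
  Remx (u *m map_mx toC M) = Remx u *m M.
Proof.
apply/matrixP => i j; rewrite !mxE (raddf_sum (@complex.Re R : Rcomplex R -> R)).
by apply: eq_bigr => k _; rewrite !mxE; case: (u i k) => a b /=; rewrite mulr0 subr0.
Qed.

Lemma Im_mulmx_real m n p (u : 'M[R[i]]_(m, n)) (M : 'M[R]_(n, p)) :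
  Immx (u *m map_mx toC M) = Immx u *m M.
Proof.
apply/matrixP => i j; rewrite !mxE (raddf_sum (@complex.Im R : Rcomplex R -> R)).
by apply: eq_bigr => k _; rewrite !mxE; case: (u i k) => a b /=; rewrite mulr0 add0r.
Qed.

Lemma Re_scalemx m n (a : R[i]) (u : 'M[R[i]]_(m, n)) :
  Remx (a *: u) = complex.Re a *: Remx u - complex.Im a *: Immx u.
Proof. by apply/matrixP => i j; rewrite !mxE; case: a => a b; case: (u i j). Qed.

Lemma Im_scalemx m n (a : R[i]) (u : 'M[R[i]]_(m, n)) :
  Immx (a *: u) = complex.Im a *: Remx u + complex.Re a *: Immx u.
Proof.
by apply/matrixP => i j; rewrite !mxE; case: a => a b; case: (u i j) => c d /=; rewrite addrC.
Qed.

Lemma Re_Im_mx_eq0 m n (u : 'M[R[i]]_(m, n)) : Remx u = 0 -> Immx u = 0 -> u = 0.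
Proof.
move=> /matrixP Re0 /matrixP Im0; apply/matrixP => i j.
by move: (Re0 i j) (Im0 i j); rewrite !mxE; case: (u i j) => a b /= -> ->.
Qed.

End RealAndImaginaryParts.

Lemma mx11_trace (V : nmodType) (K : 'M[V]_1) : K = (\tr K)%:M.
Proof. by rewrite trace_mx11 -mx11_scalar. Qed.

Lemma unitmx_mul_eq0 (R : comUnitRingType) m n (A : 'M[R]_m) (B : 'M[R]_(m, n)) :
  A \in unitmx -> (A *m B == 0) = (B == 0).
Proof.
move=> Aunit; apply/eqP/eqP => [AB0|->]; last exact: mulmx0.
by rewrite -(mulKmx Aunit B) AB0 mulmx0.
Qed.

Section TraceNorm.
Variable R : realDomainType.

Lemma tr_mulTmx m n (A : 'M[R]_(m, n)) : \tr (A^T *m A) = \sum_i \sum_j A j i ^+ 2.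
Proof.
by apply: eq_bigr => i _; rewrite mxE; apply: eq_bigr => j _; rewrite mxE expr2.
Qed.

Lemma tr_mulTmx_ge0 m n (A : 'M[R]_(m, n)) : 0 <= \tr (A^T *m A).
Proof.
by rewrite tr_mulTmx; apply: sumr_ge0 => i _; apply: sumr_ge0 => j _; apply: sqr_ge0.
Qed.

Lemma tr_mulTmx_eq0 m n (A : 'M[R]_(m, n)) : (\tr (A^T *m A) == 0) = (A == 0).
Proof.
apply/idP/eqP => [|->]; last by rewrite mulmx0 linear0.
rewrite tr_mulTmx psumr_eq0 => [/allP A0|i _]; last first.
  by apply: sumr_ge0 => j _; apply: sqr_ge0.
apply/matrixP => j i; rewrite mxE; move/implyP: (A0 i (mem_index_enum _)) => /(_ isT).
rewrite psumr_eq0 => [/allP /(_ j (mem_index_enum _))|k _]; last exact: sqr_ge0.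
by rewrite /= sqrf_eq0 => /eqP.
Qed.

Lemma tr_mulTmx_gt0 m n (A : 'M[R]_(m, n)) : (0 < \tr (A^T *m A)) = (A != 0).
Proof. by rewrite lt_def tr_mulTmx_eq0 tr_mulTmx_ge0 andbT. Qed.

End TraceNorm.

Lemma eigenvector_in_idempotent_range (C : numClosedFieldType) n (S P : 'M[C]_n) :
  P *m P = P -> P *m S = S *m P -> P != 0 ->
  exists u : 'rV[C]_n, [/\ u != 0, u *m P = u & exists a, u *m S = a *: u].
Proof.
move=> PP PS P0; set E := eigenspace P 1.
have EP : E *m P = 1 *: E by apply/eigenspaceP.
have rankE : (0 < \rank E)%N.
  have PE : (P <= E)%MS by apply/eigenspaceP; rewrite PP scale1r.
  rewrite lt0n mxrank_eq0; apply: contraNneq P0 => E0.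
  by move: PE; rewrite E0 submx0.
have stE : stablemx E S by apply/eigenspaceP; rewrite -mulmxA -PS mulmxA EP !scale1r.
have [a /eigenvalueP [u0 u0S u0_neq0]] := eigenvalue_closed (restrictmx E S) rankE.
have /eigenvectorP [b /eigenspaceP uS] : stablemx (u0 *m row_base E) S.
  by rewrite -(stablemx_restrict _ stE) u0S scalemx_sub.
exists (u0 *m row_base E); split; last by exists b.
  by rewrite mulmx_free_eq0 ?row_base_free.
have uE : (u0 *m row_base E <= E)%MS by rewrite (submx_trans (submxMl _ _)) ?eq_row_base.
by move/eigenspaceP: uE; rewrite scale1r.
Qed.

Lemma sym_rotation_coef_eq0 (R : realFieldType) n (S : 'M[R]_n) (x y : 'rV[R]_n) (a b : R) :
  S^T = S -> x *m S = a *: x - b *: y -> y *m S = b *: x + a *: y ->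
  (x != 0) || (y != 0) -> b = 0.
Proof.
move=> St xS yS xy0.
have : \tr (x *m S *m y^T) = \tr (y *m S *m x^T).
  by rewrite -mxtrace_tr !trmx_mul trmxK St mulmxA.
rewrite xS yS mulmxBl mulmxDl -!scalemxAl linearB linearD !linearZ /=.
have -> : \tr (y *m x^T) = \tr (x *m y^T) by rewrite -mxtrace_tr trmx_mul trmxK.
rewrite [\tr (x *m x^T)]mxtrace_mulC [\tr (y *m y^T)]mxtrace_mulC => sym.
have normx := tr_mulTmx_ge0 x; have normy := tr_mulTmx_ge0 y.
have : b * (\tr (x^T *m x) + \tr (y^T *m y)) = 0 by lra.
move/eqP; rewrite mulf_eq0 => /orP[/eqP //|/eqP norms0].
case/orP: xy0; rewrite -tr_mulTmx_gt0 => pos; lra.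
Qed.

Lemma sym_eigenvector_in_idempotent_range (R : rcfType) n (S P : 'M[R]_n) :
  S^T = S -> P *m P = P -> P *m S = S *m P -> P != 0 ->
  exists r : 'rV[R]_n, [/\ r != 0, r *m P = r & exists l, r *m S = l *: r].
Proof.
move=> St PP PS P0.
have [|||u [u0 uP [a uS]]] := @eigenvector_in_idempotent_range _ _
  (map_mx (real_complex R) S) (map_mx (real_complex R) P).
- by rewrite -map_mxM PP.
- by rewrite -!map_mxM PS.
- by rewrite map_mx_eq0.
set x := map_mx (@complex.Re R) u; set y := map_mx (@complex.Im R) u.
have xS : x *m S = complex.Re a *: x - complex.Im a *: y.
  by rewrite -Re_mulmx_real uS Re_scalemx.
have yS : y *m S = complex.Im a *: x + complex.Re a *: y.
  by rewrite -Im_mulmx_real uS Im_scalemx.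
have xy0 : (x != 0) || (y != 0).
  apply: contraNT u0; rewrite negb_or !negbK => /andP[/eqP x0 /eqP y0].
  by apply/eqP/Re_Im_mx_eq0.
have Ima0 := sym_rotation_coef_eq0 St xS yS xy0.
rewrite Ima0 scale0r subr0 in xS; rewrite Ima0 scale0r add0r in yS.
case/orP: xy0 => [x0|y0]; [exists x|exists y]; split => //.
- by rewrite -Re_mulmx_real uP.
- by exists (complex.Re a).
- by rewrite -Im_mulmx_real uP.
- by exists (complex.Re a).
Qed.

Section Flips.
Variables (R : comPzRingType) (n : nat).
Implicit Types (J P M : 'M[R]_n) (X : 'cV[R]_n).

Definition commuting_projection J P := [/\ P^T = P, P *m P = P & P *m J = J *m P].

(* M restricts to an isometry of the range of P and vanishes on its orthogonal
   complement; it anticommutes with J and negates the component P X of X. *)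
Definition flips_on P J X M :=
  [/\ M^T *m M = P, P *m M = M, M *m P = M, M *m J = - (J *m M) & M *m X = - (P *m X)].

Lemma sym_mulmx_absorb P Q : P^T = P -> Q^T = Q -> P *m Q = Q -> Q *m P = Q.
Proof. by move=> Psym Qsym PQ; rewrite -[LHS]trmxK trmx_mul Psym Qsym PQ Qsym. Qed.

Lemma commuting_projection_sub J P Q :
  commuting_projection J P -> commuting_projection J Q -> P *m Q = Q ->
  commuting_projection J (P - Q).
Proof.
move=> [Psym PP PJ] [Qsym QQ QJ] PQ.
have QP := sym_mulmx_absorb Psym Qsym PQ.
split; first by rewrite linearB /= Psym Qsym.
  by rewrite mulmxBl !mulmxBr PP PQ QP QQ subrr subr0.
by rewrite mulmxBl mulmxBr PJ QJ.
Qed.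

Lemma flips_on_add J X P Q M M' :
  commuting_projection J P -> commuting_projection J Q -> P *m Q = Q ->
  flips_on Q J X M -> flips_on (P - Q) J X M' -> flips_on P J X (M + M').
Proof.
move=> Pproj Qproj PQ [MM QM MQ MJ MX] [M'M' PQM' M'PQ M'J M'X].
have [PQsym PQidem _] := commuting_projection_sub Pproj Qproj PQ.
have [[Psym PP _] [Qsym _ _]] := (Pproj, Qproj).
have QP := sym_mulmx_absorb Psym Qsym PQ.
have PM : P *m M = M by rewrite -QM mulmxA PQ.
have PQM : (P - Q) *m M = 0 by rewrite mulmxBl PM QM subrr.
have MTM' : M^T *m M' = 0 by rewrite -PQM' mulmxA -PQsym -trmx_mul PQM trmx0 mul0mx.
have M'TM : M'^T *m M = 0 by rewrite -[LHS]trmxK trmx_mul trmxK MTM' trmx0.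
split.
- by rewrite [(M + M')^T]linearD /= mulmxDl !mulmxDr MM M'M' MTM' M'TM addr0 add0r addrC subrK.
- by rewrite mulmxDr PM -PQM' mulmxA mulmxBr PP PQ.
- by rewrite mulmxDl -MQ -mulmxA QP -M'PQ -mulmxA mulmxBl PP QP.
- by rewrite mulmxDl mulmxDr MJ M'J opprD.
- by rewrite mulmxDl MX M'X mulmxBl opprB addKr.
Qed.

End Flips.

Section SkewForm.
Variables (R : realFieldType) (n : nat) (J : 'M[R]_n).
Hypothesis Jskew : J^T = - J.

Lemma skew_form0 (v : 'cV[R]_n) : v^T *m J *m v = 0.
Proof.
have : \tr (v^T *m J *m v) = - \tr (v^T *m J *m v).
  by rewrite -{1}mxtrace_tr !trmx_mul trmxK Jskew mulNmx mulmxN linearN mulmxA.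
by move=> tr_opp; rewrite [LHS]mx11_trace (_ : \tr _ = 0) ?raddf0 //; lra.
Qed.

Lemma skew_sqr_transpose (v : 'cV[R]_n) : (J *m (J *m v))^T = v^T *m J *m J.
Proof. by rewrite !trmx_mul Jskew !(mulmxN, mulNmx) opprK. Qed.

End SkewForm.

Section SkewInvertible.
Variables (R : rcfType) (n : nat) (J : 'M[R]_n).
Hypotheses (Jskew : J^T = - J) (Junit : J \in unitmx).
Variable P : 'M[R]_n.
Hypotheses (Pproj : commuting_projection J P) (P_neq0 : P != 0).

Lemma skew_eigenvector_in_range : exists v : 'cV[R]_n, exists l : R,
  [/\ v != 0, P *m v = v, J *m (J *m v) = - (l *: v) & 0 < l].
Proof.
have [Psym Pidem PJ] := Pproj.
have JTJsym : (J^T *m J)^T = J^T *m J by rewrite trmx_mul trmxK.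
have PJTJ : P *m (J^T *m J) = J^T *m J *m P.
  by rewrite Jskew !mulNmx mulmxN mulmxA PJ -!mulmxA PJ.
have [r [r0 rP [l rS]]] := sym_eigenvector_in_idempotent_range JTJsym Pidem PJTJ P_neq0.
have JTJv : J^T *m J *m r^T = l *: r^T by rewrite -{1}JTJsym -trmx_mul rS linearZ.
have v0 : r^T != 0 by rewrite trmx_eq0.
have Jv0 : J *m r^T != 0 by rewrite unitmx_mul_eq0.
exists r^T, l; split => //.
- by rewrite -Psym -trmx_mul rP.
- by rewrite mulmxA -JTJv Jskew !mulNmx opprK.
- rewrite -tr_mulTmx_gt0 trmxK in v0; rewrite -tr_mulTmx_gt0 in Jv0.
  rewrite trmx_mul trmxK -mulmxA (mulmxA J^T) JTJv -scalemxAr linearZ /= in Jv0.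
  by rewrite (pmulr_lgt0 _ v0) in Jv0.
Qed.

(* w is a multiple of the projection of X onto the J-invariant plane spanned by
   v and J v, hence J w is orthogonal to X; when w vanishes, v itself works. *)
Lemma skew_eigenvector_orthogonal_in_range (X : 'cV[R]_n) :
  exists w : 'cV[R]_n, exists l : R,
    [/\ w != 0, P *m w = w, J *m (J *m w) = - (l *: w), 0 < l & w^T *m (J *m X) = 0].
Proof.
have [v [l [v0 Pv JJv l0]]] := skew_eigenvector_in_range.
have [_ _ PJ] := Pproj.
have Jv0 : J *m v != 0 by rewrite unitmx_mul_eq0.
set a := \tr (v^T *m X); set b := \tr (v^T *m (J *m X)).
have vX : v^T *m X = a%:M by rewrite [LHS]mx11_trace.
have vJX : v^T *m (J *m X) = b%:M by rewrite [LHS]mx11_trace.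
have JvJX : (J *m v)^T *m (J *m X) = (l * a)%:M.
  rewrite trmx_mul Jskew mulmxN mulNmx mulmxA -(skew_sqr_transpose Jskew) JJv.
  by rewrite linearN linearZ /= mulNmx opprK -scalemxAl vX scale_scalar_mx.
set w := a *: v - (l^-1 * b) *: (J *m v).
have Pw : P *m w = w by rewrite mulmxBr -!scalemxAr Pv mulmxA PJ -mulmxA Pv.
have JJw : J *m (J *m w) = - (l *: w).
  rewrite !mulmxBr -!scalemxAr JJv mulmxN -scalemxAr /w.
  rewrite scalerBr !scalerN !scalerA opprB opprK addrC.
  by rewrite [a * l]mulrC [l * (l^-1 * b)]mulrC.
have wJX : w^T *m (J *m X) = 0.
  rewrite /w linearB !linearZ /= mulmxDl -!scalemxAl mulNmx vJX JvJX scalerN.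
  rewrite !scale_scalar_mx -raddfN -raddfD /= (_ : _ + _ = 0) ?raddf0 //.
  by field; rewrite gt_eqF.
have [w0|w_neq0] := eqVneq w 0; last by exists w, l.
exists v, l; split => //.
have a0 : a = 0.
  have : \tr (v^T *m w) = 0 by rewrite w0 mulmx0 linear0.
  rewrite mulmxBr -!scalemxAr mulmxA (skew_form0 Jskew) scaler0 subr0 linearZ /=.
  by move/eqP; rewrite mulf_eq0 tr_mulTmx_eq0 (negPf v0) orbF => /eqP.
move/eqP: w0; rewrite /w a0 scale0r sub0r oppr_eq0 scaler_eq0 (negPf Jv0) orbF.
rewrite mulf_eq0 invr_eq0 (gt_eqF l0) /= => /eqP b0.
by rewrite vJX b0 raddf0.
Qed.

End SkewInvertible.

Section EigenPlane.
Variables (R : realFieldType) (n : nat) (J : 'M[R]_n) (w : 'cV[R]_n) (l : R).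
Hypotheses (Jskew : J^T = - J) (w_neq0 : w != 0) (l_neq0 : l != 0).
Hypothesis JJw : J *m (J *m w) = - (l *: w).

Let nu := \tr (w^T *m w).
Let A := w *m w^T.
Let B := J *m w *m (w^T *m J).
(* As (J w)^T = - w^T J, planeop x y = x w w^T - y (J w) (J w)^T: both the
   projection onto the plane of w and J w and the reflection of that plane
   negating w are of this form. *)
Let planeop (x y : R) := x *: A + y *: B.

Let nu_neq0 : nu != 0. Proof. by apply: lt0r_neq0; rewrite tr_mulTmx_gt0. Qed.
Let wTw : w^T *m w = nu%:M. Proof. exact: mx11_trace. Qed.
Let wTJw : w^T *m (J *m w) = 0. Proof. by rewrite mulmxA skew_form0. Qed.
Let wTJJ : w^T *m J *m J = - (l *: w^T).
Proof. by rewrite -skew_sqr_transpose // JJw linearN linearZ. Qed.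

Let mulmx_inner (m1 m2 m3 m4 m5 : nat) (a : 'M[R]_(m1, m2)) (b : 'M[R]_(m2, m3))
  (c : 'M[R]_(m3, m4)) (d : 'M[R]_(m4, m5)) : a *m b *m (c *m d) = a *m (b *m c) *m d.
Proof. by rewrite !mulmxA. Qed.

Let planeopM x y x' y' :
  planeop x y *m planeop x' y' = planeop (x * x' * nu) (y * y' * (- (l * nu))).
Proof.
have AA : A *m A = nu *: A by rewrite mulmx_inner wTw mul_mx_scalar scalemxAl.
have AB : A *m B = 0 by rewrite mulmx_inner wTJw mulmx0 mul0mx.
have BA : B *m A = 0 by rewrite mulmx_inner -(mulmxA w^T) wTJw mulmx0 mul0mx.
have BB : B *m B = (- (l * nu)) *: B.
  rewrite mulmx_inner (mulmxA (w^T *m J)) wTJJ mulNmx -scalemxAl wTw.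
  by rewrite scale_scalar_mx -raddfN /= mul_mx_scalar -scalemxAl.
rewrite /planeop mulmxDl !mulmxDr -!scalemxAl -!scalemxAr AA AB BA BB.
by rewrite !scaler0 addr0 add0r !scalerA; congr (_ *: _ + _ *: _); ring.
Qed.

Let planeop_tr x y : (planeop x y)^T = planeop x y.
Proof.
rewrite /planeop linearD !linearZ /= /A /B !trmx_mul !trmxK Jskew.
by rewrite !(mulmxN, mulNmx) opprK !mulmxA.
Qed.

Let planeop_J x y : planeop x y *m J = x *: (A *m J) - (y * l) *: (J *m A).
Proof.
rewrite /planeop mulmxDl -!scalemxAl /B -mulmxA wTJJ mulmxN -scalemxAr.
by rewrite !mulmxA scalerN scalerA.
Qed.

Let J_planeop x y : J *m planeop x y = x *: (J *m A) - (y * l) *: (A *m J).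
Proof.
rewrite /planeop mulmxDr -!scalemxAr /B !mulmxA -(mulmxA J J) JJw !mulNmx.
by rewrite -!scalemxAl scalerN scalerA /A ?mulmxA.
Qed.

Let planeop_X x y (X : 'cV[R]_n) : w^T *m (J *m X) = 0 -> planeop x y *m X = x *: (A *m X).
Proof.
move=> wTJX; rewrite /planeop mulmxDl -!scalemxAl /B -mulmxA -(mulmxA w^T) wTJX.
by rewrite !mulmx0 scaler0 addr0.
Qed.

Let planeop_trace x y : \tr (planeop x y) = x * nu - y * l * nu.
Proof.
rewrite /planeop mxtraceD !mxtraceZ /A /B [\tr (w *m _)]mxtrace_mulC.
rewrite [\tr (J *m w *m _)]mxtrace_mulC mulmxA wTJJ mulNmx -scalemxAl linearN linearZ /=.
by rewrite -/nu; ring.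
Qed.

Lemma eigenplane_flip (P : 'M[R]_n) (X : 'cV[R]_n) :
  P *m w = w -> P *m J = J *m P -> w^T *m (J *m X) = 0 ->
  exists Q M : 'M[R]_n,
    [/\ commuting_projection J Q, \tr Q = 2, P *m Q = Q & flips_on Q J X M].
Proof.
move=> Pw PJ wTJX.
have P_planeop x y : P *m planeop x y = planeop x y.
  by rewrite /planeop mulmxDr -!scalemxAr /A /B !mulmxA Pw PJ -(mulmxA J P w) Pw.
set c := nu^-1; set d := - (nu^-1 * l^-1).
have dl : d * l = - c by rewrite /d /c; field; rewrite ?nu_neq0 ?l_neq0.
have cc : c * c * nu = c by rewrite /c; field.
have dd : d * d * - (l * nu) = d by rewrite /d; field; rewrite ?nu_neq0 ?l_neq0.
exists (planeop c d), (planeop (- c) d).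
split; [split | | | split].
- exact: planeop_tr.
- by rewrite planeopM cc dd.
- by rewrite planeop_J J_planeop dl !scaleNr !opprK addrC.
- by rewrite planeop_trace dl mulNr opprK /c mulVf // -mulr2n.
- exact: P_planeop.
- by rewrite planeop_tr planeopM (mulrNN c) cc dd.
- by rewrite planeopM (mulrN c) (mulNr (c * c)) cc dd.
- by rewrite planeopM (mulNr c) (mulNr (c * c)) cc dd.
- by rewrite planeop_J J_planeop dl !scaleNr !opprK opprD opprK addrC.
- by rewrite !planeop_X // scaleNr.
Qed.

End EigenPlane.

Section Decomposition.
Variables (R : rcfType) (n : nat) (J : 'M[R]_n).
Hypotheses (Jskew : J^T = - J) (Junit : J \in unitmx).

Lemma commuting_projection_tr_ge0 P : commuting_projection J P -> 0 <= \tr P.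
Proof. by case=> Psym PP _; rewrite -PP -{1}Psym tr_mulTmx_ge0. Qed.

Lemma flips_on_exists (X : 'cV[R]_n) (k : nat) (P : 'M[R]_n) :
  \tr P = k%:R -> commuting_projection J P -> exists M, flips_on P J X M.
Proof.
elim/ltn_ind: k P => k IH P trP Pproj.
have [->|P_neq0] := eqVneq P 0.
  by exists 0; split; rewrite ?trmx0 ?mulmx0 ?mul0mx ?oppr0.
have [w [l [w_neq0 Pw JJw l_gt0 wTJX]]] :=
  skew_eigenvector_orthogonal_in_range Jskew Junit Pproj P_neq0 X.
have [_ _ PJ] := Pproj.
have [Q [M [Qproj trQ PQ flipM]]] :=
  eigenplane_flip Jskew w_neq0 (lt0r_neq0 l_gt0) JJw Pw PJ wTJX.
have PQproj := commuting_projection_sub Pproj Qproj PQ.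
have k_ge2 : (2 <= k)%N.
  by rewrite -(ler_nat R) -subr_ge0 -trP -trQ -linearB commuting_projection_tr_ge0.
have trPQ : \tr (P - Q) = (k - 2)%:R by rewrite linearB /= trP trQ natrB.
have [|M' flipM'] := IH (k - 2)%N _ (P - Q) trPQ PQproj; first by lia.
by exists (M + M'); apply: flips_on_add flipM flipM'.
Qed.

End Decomposition.

Lemma skew_flip (R : rcfType) n (J : 'M[R]_n) (X : 'cV[R]_n) :
  J^T = - J -> J \in unitmx ->
  exists N : 'M[R]_n, [/\ N^T *m N = 1%:M, N *m J = - (J *m N) & N *m X = - X].
Proof.
move=> Jskew Junit.
have Iproj : commuting_projection J 1%:M by split; rewrite ?trmx1 ?mulmx1 ?mul1mx.
have [N [NN _ _ NJ NX]] := flips_on_exists Jskew Junit X (mxtrace1 _ _) Iproj.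
by exists N; rewrite NX mul1mx.
Qed.

Section Line.
Variables (R : realType) (n : nat) (J : 'M[R]_n) (ip : 'M[R]_n -> 'M[R]_n -> R).

Lemma line_so_subspace : skew_sym J -> is_so_subspace (line J).
Proof.
move=> Jskew; split; first by exists 0; rewrite scale0r.
split; first by move=> c K L [a ->] [b ->]; exists (c * a + b); rewrite scalerA scalerDl.
by move=> K [a ->]; rewrite /skew_sym linearZ /= Jskew scalerN.
Qed.

Lemma line_ip_scale a b :
  is_inner_product (line J) ip -> ip (a *: J) (b *: J) = a * b * ip J J.
Proof.
case=> ip_lin [ip_sym _].
have lineZ c : line J (c *: J) by exists c.
have line0 : line J 0 by exists 0; rewrite scale0r.
have lineJ : line J J by exists 1; rewrite scale1r.
have ipZ c K : line J K -> ip (c *: J) K = c * ip J K.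
  move=> lineK; have := ip_lin 1 0 0 K line0 line0 lineK.
  rewrite scaler0 addr0 mul1r => ip0K.
  by have := ip_lin c J 0 K lineJ line0 lineK; rewrite addr0 => ->; lra.
by rewrite ipZ // ip_sym // ipZ // mulrA (mulrC a).
Qed.

Lemma line_orth_normalizer (N : 'M[R]_n) : is_inner_product (line J) ip ->
  orth_mx N -> N *m J *m invmx N = - J -> orth_normalizer (line J) ip N.
Proof.
move=> ipJ Northo NJN.
have conjZ a : N *m (a *: J) *m invmx N = (- a) *: J.
  by rewrite -scalemxAr -scalemxAl NJN scalerN scaleNr.
split=> //; split; first by move=> K [a ->]; rewrite conjZ; exists (- a).
by move=> K L [a ->] [b ->]; rewrite !conjZ !line_ip_scale // mulrNN.
Qed.

End Line.

Theorem mainTheorem2 (R : realType) (n : nat) (J : 'M[R]_n)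
  (ip : 'M[R]_n -> 'M[R]_n -> R) :
  skew_sym J -> J \in unitmx -> is_inner_product (line J) ip ->
  WS_pair (line J) ip /\
  (forall X : 'cV[R]_n, exists N : 'M[R]_n,
     orth_mx N /\ N *m J *m invmx N = - J /\ N *m X = - X).
Proof.
move=> Jskew Junit ipJ.
have flip (X : 'cV[R]_n) : exists N : 'M[R]_n,
    [/\ orth_mx N, N *m J *m invmx N = - J, N *m J = - (J *m N) & N *m X = - X].
  have [N [Northo NJ NX]] := skew_flip X Jskew Junit.
  have [_ Nunit] := mulmx1_unit Northo.
  by exists N; split => //; rewrite NJ mulNmx -mulmxA mulmxV ?mulmx1.
split; last by move=> X; have [N [? ? _ ?]] := flip X; exists N.
split; first exact: line_so_subspace.
split=> // _ X [c ->]; have [N [Northo NJN NJ NX]] := flip X.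
exists N; split; first exact: line_orth_normalizer.
by split=> //; rewrite -scalemxAr NJ scalerN scalemxAl.
Qed.
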